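(* Let $A$ be any (possibly randomized) online algorithm for Machine Covering on $m$ machines that is $c$-competitive in the adversarial model when it knows the input length $n$ beforehand. Then there is an online strategy $B$ that does not know $n$ and is $c$-competitive in the adversarial model. If $A$ is deterministic, $B$ can be chosen deterministic as well.
   Context: Machine Covering: jobs with non-negative sizes are assigned to $m$ identical parallel machines, maximizing the minimum machine load; $\mathrm{OPT}$ denotes the optimal offline minimum load. Computability is ignored. A deterministic online algorithm that does not know $n$ is a function mapping every finite job sequence $J_1,\dots,J_{n'}$ to the machine onto which $J_{n'}$ is scheduled; a deterministic online algorithm that knows $n$ maps tuples $(n,J_1,\dots,J_{n'})$ with $n\ge n'$ to the machine onto which $J_{n'}$ is scheduled, where $n$ is the total input length. A randomized online algorithm is a probability distribution over deterministic ones. An algorithm is $c$-competitive in the adversarial model if for every input sequence (in every order) its expected minimum load is at least $\mathrm{OPT}/c$. *)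

From HB Require Import structures.
From mathcomp Require Import all_boot all_order all_algebra.
From mathcomp Require Import all_classical all_reals all_analysis.
Unset Printing Implicit Defensive.
Import Order.TTheory GRing.Theory Num.Theory.
Local Open Scope ring_scope.
Local Open Scope classical_set_scope.

Section MachineCovering.
Context {R : realType} {m : nat}.

(* A deterministic online algorithm that does NOT know n: maps the job
   sequence J_1..J_n' (the last entry being the current job) to the machine
   on which J_n' is scheduled. (Its value on [::] is irrelevant.) *)
Definition det_alg := seq R -> 'I_m.

(* A deterministic online algorithm that KNOWS n: maps (n, J_1..J_n') with
   n >= n' to the machine for J_n'. (Values for n < n' are irrelevant.) *)
Definition det_alg_n := nat -> seq R -> 'I_m.

Definition load (sigma : seq R) (g : 'I_(size sigma) -> 'I_m) (j : 'I_m) : R :=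
  \sum_(i < size sigma | g i == j) sigma`_i.

(* minimum machine load (as an extended real; finite when m > 0) *)
Definition minload (sigma : seq R) (g : 'I_(size sigma) -> 'I_m) : \bar R :=
  \big[Order.min/+oo%E]_(j < m) (@load sigma g j)%:E.

Definition OPT (sigma : seq R) : \bar R :=
  \big[Order.max/-oo%E]_(g : {ffun 'I_(size sigma) -> 'I_m}) @minload sigma g.

Definition sched (A : det_alg) (sigma : seq R) : 'I_(size sigma) -> 'I_m :=
  fun i => A (take i.+1 sigma).

Definition sched_n (A : det_alg_n) (sigma : seq R) : 'I_(size sigma) -> 'I_m :=
  fun i => A (size sigma) (take i.+1 sigma).

Definition valid_input (sigma : seq R) : bool := all (fun x => 0 <= x) sigma.

Definition det_competitive (c : R) (A : det_alg) : Prop :=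
  forall sigma, valid_input sigma ->
    (OPT sigma * (c^-1)%:E <= @minload sigma (sched A sigma))%E.

Definition det_competitive_n (c : R) (A : det_alg_n) : Prop :=
  forall sigma, valid_input sigma ->
    (OPT sigma * (c^-1)%:E <= @minload sigma (sched_n A sigma))%E.

(* A randomized algorithm is a probability distribution over deterministic
   ones: a probability space (T, P) together with a family A : T -> det_alg
   which is measurable for the product sigma-algebra on the space of
   deterministic algorithms (i.e. every decision is a measurable function). *)
Definition rand_alg_measurable {d} {T : measurableType d} (A : T -> det_alg) :=
  forall (s : seq R) (j : 'I_m), measurable [set w | A w s = j].

Definition rand_alg_n_measurable {d} {T : measurableType d} (A : T -> det_alg_n) :=
  forall (n : nat) (s : seq R) (j : 'I_m), measurable [set w | A w n s = j].

Definition rand_competitive {d} {T : measurableType d} (P : probability T R)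
    (c : R) (A : T -> det_alg) : Prop :=
  forall sigma, valid_input sigma ->
    (OPT sigma * (c^-1)%:E <= \int[P]_w @minload sigma (sched (A w) sigma))%E.

Definition rand_competitive_n {d} {T : measurableType d} (P : probability T R)
    (c : R) (A : T -> det_alg_n) : Prop :=
  forall sigma, valid_input sigma ->
    (OPT sigma * (c^-1)%:E <= \int[P]_w @minload sigma (sched_n (A w) sigma))%E.

End MachineCovering.

From HB Require Import structures.
From mathcomp Require Import all_boot all_order all_algebra.
From mathcomp Require Import all_classical all_reals all_analysis.
From mathcomp Require Import measurable_realfun.
Import Order.TTheory GRing.Theory Num.Theory.
Import numFieldTopology.Exports numFieldNormedType.Exports.
Local Open Scope ring_scope.
Local Open Scope classical_set_scope.

(* Fix an ultrafilter U on nat containing the cofinite filter.  For a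
   deterministic A that knows n, let B(s) be the U-limit of A(N, s), which exists
   because there are only m machines.  On an input s of length k, U-almost every
   N >= k makes A(N, .) agree with B on all prefixes of s; padding s with N - k
   jobs of size 0 leaves every load unchanged and cannot decrease OPT, so B is
   c-competitive.
   For a randomized A, let D(s, p) be the U-limit of the probability that
   A(N, .) takes the decisions p on the prefixes of s.  Then D([::], [::]) = 1 and
   D(s, p) is the sum of the D(s ++ [x], p ++ [j]) over the next decision j, so
   nested subintervals of [0, 1) of lengths D(s, p) realise all these decision
   trees at once under the uniform distribution.  The expected minimum load of
   the resulting algorithm on s is at least the sum over p of D(s, p) times the
   minimum load of p, which is the U-limit of the expected minimum loads of
   A(N, .) on the padded inputs, all of them at least OPT(s) / c. *)

Section ultrafilter_limits.
Context {X : Type} (F : set_system X) {FU : UltraFilter F}.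

Lemma ultra_fibre {I : finType} (f : X -> I) : exists i, F [set x | f x = i].
Proof.
apply: contrapT => /forallNP noF.
have Fneq i : F [set x | f x <> i].
  by have [/noF|] := in_ultra_setVsetC [set x | f x = i] FU.
by have [x /(_ (f x))] := filter_ex (filter_forall _ Fneq).
Qed.

Lemma ultra_cvg_bounded {R : realType} (M : R) (f : X -> R) :
  (forall x, `|f x| <= M) -> cvg (f @ F).
Proof.
move=> fM; have [p [_ clp]] : `[- M, M] `&` cluster (f @ F) !=set0.
  apply: (@segment_compact R (- M) M (f @ F)).
  apply: (@filterS _ F _ setT) => [x _ /=|]; last exact: filterT.
  by rewrite in_itv /= -ler_norml.
apply/cvg_ex; exists p => V Vp.
have [//|FnV] := in_ultra_setVsetC (f @^-1` V) FU.
by have [y [/= nVy Vy]] := clp (~` V) V FnV Vp.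
Qed.

End ultrafilter_limits.

Section machine_loads.
Context {R : realType} {m : nat}.
Implicit Types (s : seq R) (h : nat -> 'I_m).
Local Notation OPT := (@OPT R m).

Lemma load_nat s h j :
  load s (fun i => h i) j = \sum_(0 <= i < size s | h i == j) s`_i.
Proof. by rewrite big_mkord. Qed.

Lemma load_cat_nseq0 s z h h' j : (forall i, (i < size s)%N -> h' i = h i) ->
  load (s ++ nseq z 0) (fun i => h' i) j = load s (fun i => h i) j.
Proof.
move=> eq_h; rewrite !load_nat size_cat [LHS](@big_cat_nat _ _ _ (size s)) ?leq_addr //=.
rewrite [X in _ + X]big1_seq ?addr0 => [|i /andP[_]].
  apply: congr_big_nat => // i; first by case/andP=> _ /eq_h ->.
  by case/andP=> _ /andP[_ lt_is]; rewrite nth_cat lt_is.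
rewrite mem_index_iota => /andP[le_si _].
by rewrite nth_cat ltnNge le_si nth_nseq if_same.
Qed.

Lemma minload_cat_nseq0 s z h h' : (forall i, (i < size s)%N -> h' i = h i) ->
  minload (s ++ nseq z 0) (fun i => h' i) = minload s (fun i => h i).
Proof.
by move=> eq_h; apply: eq_bigr => j _; rewrite (load_cat_nseq0 _ _ _ _ _ eq_h).
Qed.

Lemma eq_minload s (g1 g2 : 'I_(size s) -> 'I_m) :
  g1 =1 g2 -> minload s g1 = minload s g2.
Proof.
move=> eq_g; apply: eq_bigr => j _; congr (_%:E).
by apply: eq_bigl => i; rewrite eq_g.
Qed.

Lemma minload_ge0 s (g : 'I_(size s) -> 'I_m) : valid_input s -> (0 <= minload s g)%E.
Proof.
move=> /allP s_ge0; apply: (big_ind (fun x => 0 <= x)%E) => // [x y|j _].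
  by rewrite le_min => -> ->.
by rewrite lee_fin sumr_ge0 // => i _; apply/s_ge0/mem_nth.
Qed.

Lemma minload_fin_num s (g : 'I_(size s) -> 'I_m) :
  (0 < m)%N -> minload s g \is a fin_num.
Proof.
move=> m_gt0; rewrite fin_numE; apply/andP; split.
  apply: (big_ind (fun x => x != -oo)%E) => // x y.
  by rewrite /Order.min; case: ifP.
rewrite lt_eqF // /minload (bigD1 (Ordinal m_gt0)) //=.
by rewrite gt_min ltry.
Qed.

Definition path_minload s (q : (size s).-tuple 'I_m) : R := fine (minload s (tnth q)).

Lemma path_minload_ge0 s q : valid_input s -> 0 <= path_minload s q.
Proof. by move=> s_valid; apply/fine_ge0/minload_ge0. Qed.

Lemma minload_schedE (B : @det_alg R m) s : (0 < m)%N ->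
  minload s (sched B s) = (path_minload s [tuple B (take i.+1 s) | i < size s])%:E.
Proof.
move=> m_gt0; rewrite fineK ?minload_fin_num //.
by apply: eq_minload => i; rewrite tnth_mktuple.
Qed.

Lemma OPT_le_cat_nseq0 s z : (0 < m)%N -> (OPT s <= OPT (s ++ nseq z 0%R))%E.
Proof.
move=> m_gt0; apply: (big_ind (fun x => x <= OPT (s ++ nseq z 0%R))%E).
- exact: leNye.
- by move=> x y lex ley; rewrite ge_max lex ley.
move=> g _; pose h n : 'I_m := oapp g (Ordinal m_gt0) (insub n).
pose g' := [ffun i : 'I_(size (s ++ nseq z 0)) => h i].
have -> : minload s g = minload (s ++ nseq z 0) g'.
  rewrite (@eq_minload s g (fun i => h i)) => [|i]; last by rewrite /h valK.
  by rewrite -(minload_cat_nseq0 s z h h) //; apply: eq_minload => i; rewrite ffunE.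
by rewrite /OPT (bigD1 g') //= le_max lexx.
Qed.

Lemma valid_input_cat_nseq0 s z : valid_input s -> valid_input (s ++ nseq z 0).
Proof. by rewrite /valid_input all_cat all_nseq lexx orbT andbT. Qed.

Lemma OPT_scale_le_cat_nseq0 s z (c : R) : (0 < m)%N -> 0 <= c ->
  (OPT s * (c^-1)%:E <= OPT (s ++ nseq z 0%R) * (c^-1)%:E)%E.
Proof.
by move=> m_gt0 c_ge0; rewrite lee_wpmul2r ?lee_fin ?invr_ge0 ?OPT_le_cat_nseq0.
Qed.

Lemma minload_sched_n_cat_nseq0 (A : @det_alg_n R m) s N : (size s <= N)%N ->
  let t := s ++ nseq (N - size s) 0 in
  minload t (sched_n A t) = minload s (sched (A N) s).
Proof.
move=> le_sN t; have size_t : size t = N by rewrite size_cat size_nseq subnKC.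
apply: (minload_cat_nseq0 s (N - size s) (fun n => A N (take n.+1 s))
                          (fun n => A (size t) (take n.+1 t))) => i lt_is.
by rewrite size_t takel_cat.
Qed.

Lemma det_competitive_n_prefix {c : R} {A : @det_alg_n R m} {s N} :
  (0 < m)%N -> 0 <= c -> det_competitive_n c A -> valid_input s -> (size s <= N)%N ->
  (OPT s * (c^-1)%:E <= minload s (sched (A N) s))%E.
Proof.
move=> m_gt0 c_ge0 A_comp s_valid le_sN.
rewrite -(minload_sched_n_cat_nseq0 A _ _ le_sN).
apply: le_trans (A_comp _ (valid_input_cat_nseq0 _ _ s_valid)).
exact: OPT_scale_le_cat_nseq0.
Qed.

Lemma rand_competitive_n_prefix {d} {T : measurableType d} {P : probability T R}
    {c : R} {A : T -> @det_alg_n R m} {s N} :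
  (0 < m)%N -> 0 <= c -> rand_competitive_n P c A -> valid_input s -> (size s <= N)%N ->
  (OPT s * (c^-1)%:E <= \int[P]_w minload s (sched (A w N) s))%E.
Proof.
move=> m_gt0 c_ge0 A_comp s_valid le_sN.
under eq_integral do rewrite -(minload_sched_n_cat_nseq0 _ _ _ le_sN).
apply: le_trans (A_comp _ (valid_input_cat_nseq0 _ _ s_valid)).
exact: OPT_scale_le_cat_nseq0.
Qed.

End machine_loads.

Section deterministic.
Context {R : realType} {m : nat} (U : set_system nat) {UU : UltraFilter U}.
Hypothesis U_cofinite : (\oo : set_system nat) `<=` U.

Definition ultra_alg (A : @det_alg_n R m) : @det_alg R m :=
  fun s => projT1 (cid (ultra_fibre U (fun N => A N s))).

Lemma ultra_algE A s : U [set N | A N s = ultra_alg A s].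
Proof. exact: (projT2 (cid (ultra_fibre U (fun N => A N s)))). Qed.

Lemma ultra_alg_competitive c A : (0 < m)%N -> 0 <= c ->
  det_competitive_n c A -> det_competitive c (ultra_alg A).
Proof.
move=> m_gt0 c_ge0 A_comp s s_valid.
have : U ([set N | (size s <= N)%N] `&` [set N | forall i : 'I_(size s),
                    A N (take i.+1 s) = ultra_alg A (take i.+1 s)]).
  apply: filterI; first exact/U_cofinite/nbhs_infty_ge.
  by apply: filter_forall => i; exact: ultra_algE.
case/filter_ex => N [/= le_sN A_agree].
rewrite (@eq_minload _ _ s _ (sched (A N) s)) => [|i]; last exact/esym/A_agree.
exact: det_competitive_n_prefix.
Qed.

End deterministic.

Section finite_range_integral.
Context {R : realType} d (T : measurableType d) (mu : {measure set T -> \bar R}).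

Lemma integral_fin_range {I : finType} (f : T -> I) (v : I -> R) :
  (forall i, measurable [set t | f t = i]) -> (forall i, 0 <= v i) ->
  (\int[mu]_t (v (f t))%:E = \sum_i (v i)%:E * mu [set t | f t = i])%E.
Proof.
move=> mf v_ge0.
transitivity (\int[mu]_t (\sum_i (v i)%:E * (\1_[set t | f t = i] t)%:E))%E.
  apply: eq_integral => t _; rewrite (bigD1 (f t)) //= big1 ?adde0.
    by rewrite indicE mem_set // mule1.
  by move=> i fi; rewrite indicE memNset ?mule0 //= => fti; rewrite fti eqxx in fi.
rewrite ge0_integral_sum //.
- apply: eq_bigr => i _; rewrite ge0_integralZl ?lee_fin //.
    by rewrite integral_indic // setIT.
  exact/measurable_EFinP/measurable_indic.
- move=> i; apply: emeasurable_funM; first exact: measurable_cst.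
  exact/measurable_EFinP/measurable_indic.
- by move=> i t _; rewrite mule_ge0 // lee_fin ?indicE ?ler0n.
Qed.

End finite_range_integral.

Lemma uniform_prob_itv {R : realType} (a b : R) (ab : a < b) (x y : R) :
  a <= x -> x <= y -> y <= b ->
  uniform_prob ab `[x, y[ = ((y - x) / (b - a))%:E.
Proof.
move=> ax xy yb; have sub_ab : `[x, y[ `<=` `[a, b].
  move=> u /=; rewrite !in_itv /= => /andP[xu uy].
  by rewrite (le_trans ax xu) (le_trans (ltW uy) yb).
rewrite /uniform_prob integral_uniform_pdf (setIidl sub_ab).
rewrite (eq_integral (cst (b - a)^-1%:E)) => [|u /[!inE] /sub_ab /=]; last first.
  by rewrite /uniform_pdf in_itv /= => ->.
rewrite integral_cst /=; last exact: measurable_itv.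
rewrite lebesgue_measure_itv /= lte_fin; case: ltgtP xy => // [xy _ | -> _].
  by rewrite -EFinD -EFinM mulrC.
by rewrite subrr mul0r mule0.
Qed.

Lemma measurable_fibre_comp {d} {T : measurableType d} {I : finType} {J : eqType}
    (f : T -> I) (g : I -> J) (j : J) :
  (forall i, measurable [set t | f t = i]) -> measurable [set t | g (f t) = j].
Proof.
move=> mf; rewrite (_ : [set t | g (f t) = j] =
    \big[setU/set0]_(i <- enum I | g i == j) [set t | f t = i]).
  by apply: bigsetU_measurable => i _; exact: mf.
apply/seteqP; split => t /=.
  by move=> gf; rewrite -bigcup_seq_cond; exists (f t) => //=; rewrite mem_enum gf eqxx.
by rewrite -bigcup_seq_cond => -[i /= /andP[_ /eqP <-] <-].
Qed.

Section decision_paths.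
Context {X : Type} {m : nat} (m_gt0 : (0 < m)%N) {d} {T : measurableType d}.
Variable B : T -> seq X -> 'I_m.

Let j0 : 'I_m := Ordinal m_gt0.

Definition follows (s : seq X) (p : seq 'I_m) : set T :=
  [set w | forall i : 'I_(size s), B w (take i.+1 s) = nth j0 p i].

Lemma follows_nil : follows [::] [::] = setT.
Proof. by apply/seteqP; split => // w _ []. Qed.

Lemma follows_rcons s x p j : size p = size s ->
  follows (rcons s x) (rcons p j) = follows s p `&` [set w | B w (rcons s x) = j].
Proof.
move=> size_p; apply/seteqP; split => w /=.
  move=> Bw; split => [i|].
    have lt_is : (i < size (rcons s x))%N by rewrite size_rcons ltnW ?ltnS.
    have := Bw (Ordinal lt_is); rewrite /= -cats1 takel_cat // nth_rcons size_p ltn_ord.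
    exact.
  have lt_s : (size s < size (rcons s x))%N by rewrite size_rcons.
  have := Bw (Ordinal lt_s); rewrite /= take_oversize ?size_rcons //.
  by rewrite nth_rcons size_p ltnn eqxx.
case=> Bw Bx [i /=]; rewrite size_rcons ltnS leq_eqVlt => /orP[/eqP eq_is | lt_is].
  by rewrite eq_is take_oversize ?size_rcons // nth_rcons size_p ltnn eqxx.
by rewrite -cats1 takel_cat // nth_rcons size_p lt_is (Bw (Ordinal lt_is)).
Qed.

Lemma follows_mktuple s (q : (size s).-tuple 'I_m) :
  [set w | [tuple B w (take i.+1 s) | i < size s] = q] = follows s q.
Proof.
apply/seteqP; split => w /=.
  by move=> <- i; rewrite -tnth_nth tnth_mktuple.
by move=> Bw; apply: eq_from_tnth => i; rewrite tnth_mktuple (tnth_nth j0).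
Qed.

Hypothesis mB : forall t j, measurable [set w | B w t = j].

Lemma measurable_follows s p : measurable (follows s p).
Proof.
rewrite (_ : follows s p =
    \big[setI/setT]_(i <- enum 'I_(size s)) [set w | B w (take i.+1 s) = nth j0 p i]).
  by apply: bigsetI_measurable => i _; exact: mB.
apply/seteqP; split => w.
  by move=> Bw; rewrite -bigcap_seq => i _; exact: Bw.
by rewrite -bigcap_seq => Bw i; apply: Bw; rewrite /= mem_enum.
Qed.

Lemma measure_follows_rcons {R : realType} (mu : {measure set T -> \bar R}) s x p :
  size p = size s ->
  mu (follows s p) = (\sum_(j < m) mu (follows (rcons s x) (rcons p j)))%E.
Proof.
move=> size_p; under eq_bigr do rewrite follows_rcons //.
rewrite -measure_bigsetU_ord => [|j|]; first last.
- by move=> i j _ _ [w [[_ <-] [_ <-]]].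
- by apply: measurableI; [exact: measurable_follows | exact: mB].
congr (mu _); apply/seteqP; split => [w sw|w].
  by rewrite -bigcup_seq; exists (B w (rcons s x)) => //=; rewrite mem_index_enum.
by rewrite -bigcup_seq => -[j _ []].
Qed.

Lemma integral_follows {R : realType} (mu : {measure set T -> \bar R}) s
    (v : (size s).-tuple 'I_m -> R) : (forall q, 0 <= v q) ->
  (\int[mu]_w (v [tuple B w (take i.+1 s) | i < size s])%:E =
   \sum_q (v q)%:E * mu (follows s q))%E.
Proof.
move=> v_ge0; rewrite integral_fin_range // => [|q].
  by apply: eq_bigr => q _; rewrite follows_mktuple.
by rewrite follows_mktuple; exact: measurable_follows.
Qed.

End decision_paths.

Section sum_ord_lt.
Context {R : numDomainType} {n : nat} (f : 'I_n -> R).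

Lemma sum_ord_ltS (j : 'I_n) :
  \sum_(i < n | (i < j.+1)%N) f i = \sum_(i < n | (i < j)%N) f i + f j.
Proof.
rewrite (bigD1 j) ?ltnSn //= addrC; congr (_ + _); apply: eq_bigl => i.
by rewrite ltnS ltn_neqAle andbC -val_eqE.
Qed.

Lemma sum_ord_lt_le (a b : nat) : (forall i, 0 <= f i) -> (a <= b)%N ->
  \sum_(i < n | (i < a)%N) f i <= \sum_(i < n | (i < b)%N) f i.
Proof.
move=> f_ge0 le_ab; rewrite [leRHS](bigID (fun i : 'I_n => (i < a)%N)) /=.
rewrite [X in _ <= X + _](eq_bigl (fun i : 'I_n => (i < a)%N)) => [|i]; last first.
  by apply: andb_idl => /leq_trans; apply.
by rewrite lerDl sumr_ge0.
Qed.

Lemma sum_ord_lt_size : \sum_(i < n | (i < n)%N) f i = \sum_(i < n) f i.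
Proof. by apply: eq_bigl => i; rewrite ltn_ord. Qed.

End sum_ord_lt.

Section nested_cells.
Context {R : realType} {X : Type} {m : nat} (m_gt0 : (0 < m)%N).
Variable D : seq X -> seq 'I_m -> R.
Hypothesis D_ge0 : forall s p, 0 <= D s p.
Hypothesis D_nil : D [::] [::] = 1.
Hypothesis D_rcons : forall s x p, size p = size s ->
  D s p = \sum_(j < m) D (rcons s x) (rcons p j).

Let j0 : 'I_m := Ordinal m_gt0.

(* The cell of (rcons p j) is the j-th of the consecutive subintervals of
   lengths D (rcons s x) (rcons p i), i < m, into which the cell of p is cut. *)
Definition cell_start (s : seq X) (p : seq 'I_m) : R :=
  \sum_(l < size p) \sum_(i < m | (i < nth j0 p l)%N)
     D (take l.+1 s) (rcons (take l p) i).

Definition in_cell s p (u : R) : bool :=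
  cell_start s p <= u < cell_start s p + D s p.

Lemma cell_start_rcons s x p j : size p = size s ->
  cell_start (rcons s x) (rcons p j) =
  cell_start s p + \sum_(i < m | (i < j)%N) D (rcons s x) (rcons p i).
Proof.
move=> size_p; rewrite /cell_start size_rcons big_ord_recr /=; congr (_ + _).
  apply: eq_bigr => l _; have lt_lp : (l < size p)%N := ltn_ord l.
  apply: eq_big => [i|i _]; first by rewrite nth_rcons lt_lp.
  have lt_ls : (l < size s)%N by rewrite -size_p.
  by rewrite -[rcons s x]cats1 -[rcons p j]cats1 !takel_cat // ltnW.
rewrite nth_rcons ltnn eqxx -[rcons p j]cats1 take_size_cat //.
by rewrite take_oversize // size_rcons size_p.
Qed.

Lemma in_cell_rcons s x p j u : size p = size s ->
  let S k := cell_start s p + \sum_(i < m | (i < k)%N) D (rcons s x) (rcons p i) in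
  in_cell (rcons s x) (rcons p j) u = (S j <= u < S j.+1).
Proof. by move=> size_p S; rewrite /in_cell cell_start_rcons // /S sum_ord_ltS addrA. Qed.

Lemma in_cell_parent {s x p j u} : size p = size s ->
  in_cell (rcons s x) (rcons p j) u -> in_cell s p u.
Proof.
move=> size_p; rewrite in_cell_rcons // => /andP[le_u lt_u]; apply/andP; split.
  by apply: le_trans le_u; rewrite lerDl sumr_ge0.
apply: (lt_le_trans lt_u); rewrite lerD2l (D_rcons _ x _ size_p) -sum_ord_lt_size.
exact: sum_ord_lt_le.
Qed.

Lemma in_cell_rcons_inj {s x p j j' u} : size p = size s ->
  in_cell (rcons s x) (rcons p j) u -> in_cell (rcons s x) (rcons p j') u -> j = j'.
Proof.
move=> size_p; wlog lt_jj' : j j' / (j < j')%N.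
  move=> wlog_j u_j u_j'; case: (ltngtP j j') => [lt|lt|/val_inj //].
    exact: wlog_j.
  by apply/esym/wlog_j.
rewrite !in_cell_rcons // => /andP[_ lt_u] /andP[le_u _].
have := le_lt_trans le_u lt_u; rewrite ltrD2l ltNge.
by rewrite sum_ord_lt_le.
Qed.

Lemma in_cell_uniq {s p q u} : size p = size s -> size q = size s ->
  in_cell s p u -> in_cell s q u -> p = q.
Proof.
elim/last_ind: s p q => [|s x IHs] p q.
  by move=> /size0nil -> /size0nil ->.
case/lastP: p => [|p j]; first by rewrite !size_rcons => /eqP.
case/lastP: q => [|q j']; first by rewrite !size_rcons => _ /eqP.
rewrite !size_rcons => -[size_p] [size_q] u_pj u_qj'.
have eq_pq : p = q.
  exact: IHs size_p size_q (in_cell_parent size_p u_pj) (in_cell_parent size_q u_qj').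
move: u_qj'; rewrite -eq_pq => u_pj'.
by rewrite (in_cell_rcons_inj size_p u_pj u_pj').
Qed.

Lemma in_cell_take {s p u} l : size p = size s -> in_cell s p u ->
  in_cell (take l s) (take l p) u.
Proof.
elim/last_ind: s p l => [|s x IHs] p l.
  by move=> /size0nil ->.
case/lastP: p => [|p j]; first by rewrite !size_rcons => /eqP.
rewrite !size_rcons => -[size_p] u_pj.
have [le_sl|lt_ls] := leqP (size s).+1 l.
  by rewrite !take_oversize ?size_rcons ?size_p.
rewrite ltnS in lt_ls; rewrite -!cats1 !takel_cat ?size_p //.
exact: IHs (in_cell_parent size_p u_pj).
Qed.

Lemma cell_sub_unit {s p} : size p = size s ->
  0 <= cell_start s p /\ cell_start s p + D s p <= 1.
Proof.
elim/last_ind: s p => [|s x IHs] p.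
  by move=> /size0nil ->; rewrite /cell_start big_ord0 D_nil add0r.
case/lastP: p => [|p j]; first by rewrite !size_rcons => /eqP.
rewrite !size_rcons => -[size_p]; have [start_ge0 end_le1] := IHs p size_p.
rewrite cell_start_rcons //; split; first by rewrite addr_ge0 // sumr_ge0.
apply: le_trans end_le1; rewrite -addrA lerD2l (D_rcons _ x _ size_p) -sum_ord_lt_size.
by rewrite -sum_ord_ltS sum_ord_lt_le.
Qed.

Definition cell_path (u : R) (s : seq X) : option ((size s).-tuple 'I_m) :=
  [pick q : (size s).-tuple 'I_m | in_cell s q u].

(* [cell_path u s] is [None] only for u outside [0, 1), a null set, so the
   default decision j0 is irrelevant. *)
Definition cell_alg (u : R) (s : seq X) : 'I_m :=
  oapp (fun q : (size s).-tuple 'I_m => last j0 q) j0 (cell_path u s).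

Lemma cell_pathP {s} {q : (size s).-tuple 'I_m} {u} :
  in_cell s q u -> cell_path u s = Some q.
Proof.
rewrite /cell_path; case: pickP => [q' u_q'|no_q] u_q; last by rewrite no_q in u_q.
by congr Some; apply: val_inj; apply: (in_cell_uniq _ _ u_q' u_q); rewrite size_tuple.
Qed.

Lemma cell_alg_in_cell {s p u} : size p = size s -> in_cell s p u ->
  cell_alg u s = last j0 p.
Proof.
move=> size_p u_p; have size_p' : size p == size s by apply/eqP.
by rewrite /cell_alg (@cell_pathP _ (Tuple size_p') _ u_p).
Qed.

Lemma follows_cell_alg {s p u} : size p = size s -> in_cell s p u ->
  follows m_gt0 cell_alg s p u.
Proof.
move=> size_p u_p i; have le_is : (i.+1 <= size s)%N := ltn_ord i.
rewrite (@cell_alg_in_cell _ (take i.+1 p) u); last first.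
- exact: in_cell_take.
- by rewrite !size_takel // size_p.
by rewrite -nth_last size_takel ?size_p // nth_take.
Qed.

Lemma in_cell_itv s p :
  [set u | in_cell s p u] = `[cell_start s p, cell_start s p + D s p[.
Proof. by apply/seteqP; split => u; rewrite /= in_itv. Qed.

Lemma measurable_cell_alg s j : measurable [set u | cell_alg u s = j].
Proof.
apply: measurable_fibre_comp => -[q|].
  rewrite (_ : [set u | _ = Some q] = [set u | in_cell s q u]).
    by rewrite in_cell_itv; exact: measurable_itv.
  apply/seteqP; split => u /=; last exact: cell_pathP.
  by rewrite /cell_path; case: pickP => // q' u_q' [<-].
rewrite (_ : [set u | _ = None] =
    ~` \big[setU/set0]_(q <- index_enum ((size s).-tuple 'I_m)) [set u | in_cell s q u]).
  apply/measurableC/bigsetU_measurable => q _.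
  by rewrite in_cell_itv; exact: measurable_itv.
apply/seteqP; split => u /=; rewrite -bigcup_seq.
  by rewrite /cell_path; case: pickP => // no_q _ [q _ /=]; rewrite no_q.
move=> no_cell; rewrite /cell_path; case: pickP => // q u_q.
by case: no_cell; exists q; rewrite /= ?mem_index_enum.
Qed.

Lemma cell_alg_expectation s (v : (size s).-tuple 'I_m -> R) :
  (forall q, 0 <= v q) ->
  ((\sum_q v q * D s q)%:E <=
   \int[uniform_prob (@ltr01 R)]_u
      (v [tuple cell_alg u (take i.+1 s) | i < size s])%:E)%E.
Proof.
move=> v_ge0.
(* [uniform_prob] lives on the Lebesgue sigma-algebra [measurableTypeR R], which
   is convertible to the default one on R. *)
rewrite (integral_follows (T := measurableTypeR R) m_gt0 _ measurable_cell_alg) //.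
rewrite -sumEFin; apply: lee_sum => q _; rewrite EFinM lee_wpmul2l ?lee_fin //.
have [start_ge0 end_le1] := cell_sub_unit (size_tuple q).
rewrite (_ : (D s q)%:E = uniform_prob (@ltr01 R) [set u | in_cell s q u]); last first.
  by rewrite in_cell_itv uniform_prob_itv ?lerDl // subr0 divr1 addrAC subrr add0r.
apply: le_measure; rewrite ?inE.
- by rewrite in_cell_itv; exact: measurable_itv.
- exact: measurable_follows measurable_cell_alg _ _.
- by move=> u; exact: follows_cell_alg (size_tuple q).
Qed.

End nested_cells.

Section randomized.
Context {R : realType} {m : nat} (m_gt0 : (0 < m)%N).
Context (U : set_system nat) {UU : UltraFilter U}.
Hypothesis U_cofinite : (\oo : set_system nat) `<=` U.
Context {d} {T : measurableType d} (P : probability T R) (A : T -> @det_alg_n R m).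
Hypothesis mA : rand_alg_n_measurable A.

Let measurable_followsN N s p : measurable (follows m_gt0 (fun w => A w N) s p).
Proof. exact: (measurable_follows m_gt0 (fun w => A w N) (mA N)). Qed.

Definition follow_prob N s p : R := fine (P (follows m_gt0 (fun w => A w N) s p)).

Definition follow_mass s p : R := lim ((fun N => follow_prob N s p) @ U).

Lemma follow_probE N s p :
  (follow_prob N s p)%:E = P (follows m_gt0 (fun w => A w N) s p).
Proof.
rewrite fineK // ge0_fin_numE //.
exact: le_lt_trans (probability_le1 P (measurable_followsN N s p)) (ltry 1).
Qed.

Lemma follow_prob_ge0 N s p : 0 <= follow_prob N s p.
Proof. by rewrite -lee_fin follow_probE. Qed.

Lemma follow_prob_cvg s p : cvg ((fun N => follow_prob N s p) @ U).
Proof.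
apply: (ultra_cvg_bounded U 1) => N.
by rewrite ger0_norm ?follow_prob_ge0 // -lee_fin follow_probE probability_le1.
Qed.

Lemma follow_mass_ge0 s p : 0 <= follow_mass s p.
Proof.
apply: limr_ge; first exact: follow_prob_cvg.
by apply: nearW => N; exact: follow_prob_ge0.
Qed.

Lemma follow_mass_nil : follow_mass [::] [::] = 1.
Proof.
rewrite /follow_mass (_ : (fun N => follow_prob N [::] [::]) = fun=> 1) ?lim_cst //.
by apply/funext => N; apply: EFin_inj; rewrite follow_probE follows_nil probability_setT.
Qed.

Lemma follow_mass_rcons s x p : size p = size s ->
  follow_mass s p = \sum_(j < m) follow_mass (rcons s x) (rcons p j).
Proof.
move=> size_p; rewrite /follow_mass (_ : (fun N => follow_prob N s p) =
    fun N => \sum_(j < m) follow_prob N (rcons s x) (rcons p j)).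
  apply: cvg_lim => //; apply: (cvg_big add_continuous) => // j _.
  exact: follow_prob_cvg.
apply/funext => N; apply: EFin_inj; rewrite -sumEFin follow_probE.
under eq_bigr do rewrite follow_probE.
exact: (measure_follows_rcons m_gt0 (fun w => A w N) (mA N) _ _ _ _ size_p).
Qed.

Lemma measurable_cell_alg_follow_mass :
  rand_alg_measurable (cell_alg m_gt0 follow_mass).
Proof. exact: measurable_cell_alg follow_mass_ge0 follow_mass_rcons. Qed.

Lemma follow_prob_competitive c s N : 0 <= c -> rand_competitive_n P c A ->
  valid_input s -> (size s <= N)%N ->
  (@OPT R m s * (c^-1)%:E <= (\sum_q path_minload s q * follow_prob N s q)%:E)%E.
Proof.
move=> c_ge0 A_comp s_valid le_sN.
suff -> : ((\sum_q path_minload s q * follow_prob N s q)%:E =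
           \int[P]_w minload s (sched (A w N) s))%E.
  exact: rand_competitive_n_prefix.
under eq_integral do rewrite minload_schedE //.
rewrite (integral_follows m_gt0 (fun w => A w N) (mA N)) => [|q]; last first.
  exact: path_minload_ge0.
by rewrite -sumEFin; apply: eq_bigr => q _; rewrite EFinM follow_probE.
Qed.

Lemma cell_alg_competitive c : 0 <= c -> rand_competitive_n P c A ->
  rand_competitive (uniform_prob (@ltr01 R)) c (cell_alg m_gt0 follow_mass).
Proof.
move=> c_ge0 A_comp s s_valid.
under eq_integral do rewrite minload_schedE //.
apply: le_trans (cell_alg_expectation m_gt0 _ follow_mass_ge0 follow_mass_nil
  follow_mass_rcons _ _ (fun q => path_minload_ge0 s q s_valid)).
have S_cvg : (fun N => \sum_q path_minload s q * follow_prob N s q) @ U -->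
             \sum_q path_minload s q * follow_mass s q.
  apply: (cvg_big add_continuous) => // q _.
  exact: cvgMl_tmp (follow_prob_cvg s q).
apply: (cvge_to_ge (a := U)
  (f := fun N => (\sum_q path_minload s q * follow_prob N s q)%:E)).
  by apply: cvg_EFin; [exact: nearW | exact: S_cvg].
have U_ge : U [set N | (size s <= N)%N] by exact/U_cofinite/nbhs_infty_ge.
apply: filterS U_ge => N /= le_sN.
exact: follow_prob_competitive.
Qed.

End randomized.

Theorem proposition18 (R : realType) (m : nat) (c : R) :
  (0 < m)%N -> (0 < c)%R ->
  (* randomized case *)
  (forall (d : measure_display) (T : measurableType d) (P : probability T R)
          (A : T -> @det_alg_n R m),
     rand_alg_n_measurable A -> rand_competitive_n P c A ->
     exists (d' : measure_display) (T' : measurableType d')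
            (P' : probability T' R) (B : T' -> @det_alg R m),
       rand_alg_measurable B /\ rand_competitive P' c B)
  /\
  (* deterministic case *)
  (forall A : @det_alg_n R m, det_competitive_n c A ->
     exists B : @det_alg R m, det_competitive c B).
Proof.
move=> m_gt0 c_gt0; have c_ge0 := ltW c_gt0.
have [U [U_ultra U_cofinite]] := @ultraFilterLemma nat (\oo : set_system nat) _.
split.
- move=> d T P A mA A_comp.
  exists _, _, (uniform_prob (@ltr01 R)), (cell_alg m_gt0 (follow_mass m_gt0 U P A)).
  split; first exact: measurable_cell_alg_follow_mass.
  exact: cell_alg_competitive.
- move=> A A_comp; exists (ultra_alg U A).
  exact: ultra_alg_competitive.
Qed.
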